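(* Fix $B>0$. For an integer $k\ge1$ and $p\in(0,1)$ let \[V_k(p)=\Big(\frac1p+\frac2{1-p}\Big)B^2k+\frac{2B^2(p^{k}-1)}{(1-p)^2},\] the worst-case (over potential outcomes in $[0,B]$) variance of the path-level Horvitz–Thompson estimator on an alternating path of length $k$ under the Alternating Path Randomized Design with parameter $p$. Let $p^*_k$ denote the optimal (minimizing) value of $p$ for $V_k$. Then $\lim_{k\to\infty}p^*_k=\sqrt2-1$.
   Context: Alternating Path Randomized Design on an alternating path with edges $e_1,\dots,e_k$ (consecutive edges alternate between treatment-only and control-only matches): indicators $W_1,\dots,W_k\in\{0,1\}$ with $\mathbb{P}(W_1=1)=p/(1+p)$ and, for $j\ge2$, conditionally on $W_1,\dots,W_{j-1}$, $W_j=1$ with probability $p$ if $W_{j-1}=0$ and $W_j=0$ if $W_{j-1}=1$. The path-level estimator is $\hat\Gamma=\sum_j (-1)^{j+1}W_jY_{e_j}/\mathbb{P}(W_j=1)$ (up to a global sign), and $V_k(p)=\max_{Y_{e_j}\in[0,B]}\mathrm{Var}(\hat\Gamma)$, which equals the displayed formula. The minimization is over the design parameter $p\in(0,1)$. *)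

From Stdlib Require Import Reals Lra.
Open Scope R_scope.

Definition V (B : R) (k : nat) (p : R) : R :=
  (1 / p + 2 / (1 - p)) * B ^ 2 * INR k + 2 * B ^ 2 * (p ^ k - 1) / (1 - p) ^ 2.

Definition is_minimizer (B : R) (k : nat) (p : R) : Prop :=
  0 < p < 1 /\ forall q, 0 < q < 1 -> V B k p <= V B k q.

(* Write V_k(p) = B^2 (k g(p) - 2 (1 - p^k) / (1 - p)^2) with g(p) = 1/p + 2/(1-p).
   The function g is minimal exactly at sqrt 2 - 1, with
   g(p) - g(sqrt 2 - 1) >= (p - (sqrt 2 - 1))^2, whereas the correction term is at
   most 2 / (1 - p)^2.  So as soon as the minimizer p*_k stays away from 1 we get
   k (p*_k - (sqrt 2 - 1))^2 <= const.  It does: expanding V_k(p) / B^2 as the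
   double geometric sum k/p + 2 sum_{j<k} sum_{i<j} p^i shows that V_k is
   nondecreasing on [9/10, 1) for k >= 6, and V_k(9/10) exceeds V_k(sqrt 2 - 1) for
   k >= 14.  The same monotonicity, together with V_k(p) >= B^2 k/p near 0, also
   confines a minimizer of V_k to the compact interval [1/22, 9/10]. *)
From Stdlib Require Import Reals Lra Lia Psatz.
Open Scope R_scope.

Fixpoint geom_sum (q : R) (j : nat) : R :=
  match j with O => 0 | S j => geom_sum q j + q ^ j end.

Fixpoint geom_sum2 (q : R) (k : nat) : R :=
  match k with O => 0 | S k => geom_sum2 q k + geom_sum q k end.

Lemma geom_sum_mul q j : geom_sum q j * (1 - q) = 1 - q ^ j.
Proof.
  induction j as [|j IH]; simpl; [ring|].
  replace ((geom_sum q j + q ^ j) * (1 - q))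
    with (geom_sum q j * (1 - q) + q ^ j * (1 - q)) by ring.
  rewrite IH; ring.
Qed.

Lemma geom_sum2_mul q k : geom_sum2 q k * (1 - q) ^ 2 = INR k * (1 - q) - 1 + q ^ k.
Proof.
  induction k as [|k IH]; simpl geom_sum2; [simpl; ring|].
  replace ((geom_sum2 q k + geom_sum q k) * (1 - q) ^ 2)
    with (geom_sum2 q k * (1 - q) ^ 2 + geom_sum q k * (1 - q) * (1 - q)) by ring.
  rewrite IH, geom_sum_mul, S_INR; simpl; ring.
Qed.

Lemma geom_sum_nonneg q j : 0 <= q -> 0 <= geom_sum q j.
Proof.
  intros Hq; induction j as [|j IH]; simpl; [lra|].
  pose proof (pow_le q j Hq); lra.
Qed.

Lemma geom_sum2_nonneg q k : 0 <= q -> 0 <= geom_sum2 q k.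
Proof.
  intros Hq; induction k as [|k IH]; simpl; [lra|].
  pose proof (geom_sum_nonneg q k Hq); lra.
Qed.

(* The linear term [q] alone already accounts for the increment. *)
Lemma geom_sum_incr r q j :
  0 <= r <= q -> (2 <= j)%nat -> q - r <= geom_sum q j - geom_sum r j.
Proof.
  intros Hrq Hj; induction Hj as [|j _ IH]; [simpl; lra|].
  simpl; pose proof (pow_incr r q j Hrq); lra.
Qed.

Lemma geom_sum2_incr r q k :
  0 <= r <= q -> (2 <= k)%nat -> (INR k - 2) * (q - r) <= geom_sum2 q k - geom_sum2 r k.
Proof.
  intros Hrq Hk; induction Hk as [|k Hk IH]; [simpl; lra|].
  simpl geom_sum2; rewrite S_INR.
  pose proof (geom_sum_incr r q k Hrq Hk); lra.
Qed.

Definition slope (q : R) : R := 1 / q + 2 / (1 - q).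

Lemma V_scale B k q : V B k q = B ^ 2 * V 1 k q.
Proof. unfold V, Rdiv; ring. Qed.

Lemma is_minimizer_scale B k p : 0 < B -> is_minimizer B k p <-> is_minimizer 1 k p.
Proof.
  intros HB; assert (HB2 : 0 < B ^ 2) by (apply pow_lt; lra).
  unfold is_minimizer; setoid_rewrite (V_scale B k).
  split; intros [Hp Hmin]; split; try exact Hp; intros q Hq; specialize (Hmin q Hq).
  - exact (Rmult_le_reg_l _ _ _ HB2 Hmin).
  - apply Rmult_le_compat_l; lra.
Qed.

Lemma V1_geom_sum2 k q : 0 < q < 1 -> V 1 k q = INR k / q + 2 * geom_sum2 q k.
Proof.
  intros Hq.
  assert (HS : geom_sum2 q k = (INR k * (1 - q) - 1 + q ^ k) / (1 - q) ^ 2).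
  { rewrite <- geom_sum2_mul; field; lra. }
  unfold V; rewrite HS; field; lra.
Qed.

Lemma V1_le_slope k q : 0 < q < 1 -> V 1 k q <= INR k * slope q.
Proof.
  intros Hq; unfold V, slope.
  assert (Hpow : q ^ k <= 1) by (rewrite <- (pow1 k); apply pow_incr; lra).
  assert (0 < (1 - q) ^ 2) by (apply pow_lt; lra).
  assert (0 < / (1 - q) ^ 2) by (apply Rinv_0_lt_compat; lra).
  replace (2 * 1 ^ 2 * (q ^ k - 1) / (1 - q) ^ 2)
    with (2 * (q ^ k - 1) * / (1 - q) ^ 2) by (field; lra).
  nra.
Qed.

Lemma slope_le_V1 k q : 0 < q < 1 -> INR k * slope q - 2 / (1 - q) ^ 2 <= V 1 k q.
Proof.
  intros Hq; unfold V, slope.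
  pose proof (pow_le q k ltac:(lra)).
  assert (0 < (1 - q) ^ 2) by (apply pow_lt; lra).
  replace (2 * 1 ^ 2 * (q ^ k - 1) / (1 - q) ^ 2)
    with (2 * q ^ k / (1 - q) ^ 2 - 2 / (1 - q) ^ 2) by (field; lra).
  assert (0 <= 2 * q ^ k / (1 - q) ^ 2).
  { unfold Rdiv; apply Rmult_le_pos; [lra | apply Rlt_le, Rinv_0_lt_compat; lra]. }
  lra.
Qed.

Lemma V1_incr_near_1 k r q :
  (6 <= k)%nat -> 9/10 <= r <= q -> q < 1 -> V 1 k r <= V 1 k q.
Proof.
  intros Hk Hrq Hq.
  rewrite !V1_geom_sum2 by lra.
  pose proof (geom_sum2_incr r q k ltac:(lra) ltac:(lia)).
  assert (Hk6 : 6 <= INR k) by (replace 6 with (INR 6) by (simpl; ring); apply le_INR; lia).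
  (* k/r - k/q = k (q - r) / (q r) <= (100/81) k (q - r) <= 2 (k - 2) (q - r) *)
  assert (Hquot : INR k / r - INR k / q <= 100 / 81 * INR k * (q - r)).
  { replace (INR k / r - INR k / q) with (INR k * (q - r) * / (q * r)) by (field; lra).
    assert (/ (q * r) <= 100 / 81).
    { replace (100 / 81) with (/ (81 / 100)) by field.
      apply Rinv_le_contravar; nra. }
    assert (0 <= INR k * (q - r)) by nra.
    nra. }
  nra.
Qed.

Lemma slope_sub_opt p : 0 < p < 1 ->
  (slope p - (3 + 2 * sqrt 2)) * (p * (1 - p)) = (3 + 2 * sqrt 2) * (p - (sqrt 2 - 1)) ^ 2.
Proof.
  intros Hp.
  assert (Hs : sqrt 2 * sqrt 2 = 2) by (apply sqrt_sqrt; lra).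
  assert (E : slope p * (p * (1 - p)) = 1 + p) by (unfold slope; field; lra).
  replace ((slope p - (3 + 2 * sqrt 2)) * (p * (1 - p)))
    with (slope p * (p * (1 - p)) - (3 + 2 * sqrt 2) * (p * (1 - p))) by ring.
  rewrite E.
  replace ((3 + 2 * sqrt 2) * (p - (sqrt 2 - 1)) ^ 2) with
    (1 + p - (3 + 2 * sqrt 2) * (p * (1 - p))
     + (sqrt 2 * sqrt 2 - 2) * (2 * sqrt 2 - 1 - 4 * p)) by ring.
  rewrite Hs; ring.
Qed.

Lemma sqrt2_bounds : 1 < sqrt 2 < 3/2.
Proof.
  assert (Hs : sqrt 2 * sqrt 2 = 2) by (apply sqrt_sqrt; lra).
  pose proof (sqrt_pos 2); nra.
Qed.

Lemma slope_opt : slope (sqrt 2 - 1) = 3 + 2 * sqrt 2.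
Proof.
  pose proof sqrt2_bounds.
  pose proof (slope_sub_opt (sqrt 2 - 1) ltac:(lra)) as E.
  replace (sqrt 2 - 1 - (sqrt 2 - 1)) with 0 in E by ring.
  assert (0 < (sqrt 2 - 1) * (1 - (sqrt 2 - 1))) by nra.
  simpl in E; nra.
Qed.

(* Uses p (1 - p) <= 1/4 and 4 (3 + 2 sqrt 2) >= 1. *)
Lemma sq_dist_opt_le_slope p : 0 < p < 1 ->
  (p - (sqrt 2 - 1)) ^ 2 <= slope p - (3 + 2 * sqrt 2).
Proof.
  intros Hp; pose proof (slope_sub_opt p Hp) as E.
  pose proof (sqrt_pos 2).
  assert (0 < p * (1 - p) <= 1/4).
  { split; [apply Rmult_lt_0_compat; lra | pose proof (pow2_ge_0 (p - 1/2)); nra]. }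
  pose proof (pow2_ge_0 (p - (sqrt 2 - 1))).
  nra.
Qed.

Lemma exists_minimizer k : (6 <= k)%nat -> exists p, is_minimizer 1 k p.
Proof.
  intros Hk.
  assert (Hk0 : 0 < INR k) by (apply lt_0_INR; lia).
  assert (Hcont : forall c, 1/22 <= c <= 9/10 -> continuity_pt (V 1 k) c).
  { intros c Hc; unfold V; reg; [apply pow_nonzero | | ]; lra. }
  destruct (continuity_ab_min (V 1 k) (1/22) (9/10) ltac:(lra) Hcont) as [p [Hmin Hp]].
  exists p; split; [lra|]; intros q Hq.
  assert (Hp9 : V 1 k p <= V 1 k (9/10)) by (apply Hmin; lra).
  destruct (Rle_lt_dec q (1/22)) as [Hq0|Hq0].
  - (* near 0, V_k(q) >= k/q >= 22 k > k g(9/10) = 190 k / 9 >= V_k(9/10) *)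
    pose proof (V1_le_slope k (9/10) ltac:(lra)) as Hup.
    replace (slope (9/10)) with (190/9) in Hup by (unfold slope; field).
    rewrite (V1_geom_sum2 k q Hq).
    pose proof (geom_sum2_nonneg q k ltac:(lra)).
    assert (22 <= / q) by (replace 22 with (/ (1/22)) by field; apply Rinv_le_contravar; lra).
    unfold Rdiv; nra.
  - destruct (Rle_lt_dec q (9/10)) as [Hq1|Hq1].
    + apply Hmin; lra.
    + eapply Rle_trans; [exact Hp9 | apply V1_incr_near_1; lra || lia].
Qed.

Lemma minimizer_lt_9_10 k p : (14 <= k)%nat -> is_minimizer 1 k p -> p < 9/10.
Proof.
  intros Hk [Hp Hmin].
  destruct (Rlt_le_dec p (9/10)) as [H|H]; [exact H | exfalso].
  pose proof sqrt2_bounds.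
  assert (Hk14 : 14 <= INR k)
    by (replace 14 with (INR 14) by (simpl; ring); apply le_INR; lia).
  pose proof (Hmin (sqrt 2 - 1) ltac:(lra)) as Hopt.
  pose proof (V1_le_slope k (sqrt 2 - 1) ltac:(lra)) as Hup.
  rewrite slope_opt in Hup.
  pose proof (V1_incr_near_1 k (9/10) p ltac:(lia) ltac:(lra) ltac:(lra)) as Hmono.
  pose proof (slope_le_V1 k (9/10) ltac:(lra)) as Hlow.
  replace (slope (9/10)) with (190/9) in Hlow by (unfold slope; field).
  replace (2 / (1 - 9/10) ^ 2) with 200 in Hlow by field.
  nra.
Qed.

Lemma minimizer_sq_dist k p : (14 <= k)%nat -> is_minimizer 1 k p ->
  INR k * (p - (sqrt 2 - 1)) ^ 2 <= 200.
Proof.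
  intros Hk Hm.
  pose proof (minimizer_lt_9_10 k p Hk Hm) as Hp9.
  destruct Hm as [Hp Hmin].
  pose proof sqrt2_bounds.
  assert (Hk0 : 0 < INR k) by (apply lt_0_INR; lia).
  pose proof (Hmin (sqrt 2 - 1) ltac:(lra)) as Hopt.
  pose proof (V1_le_slope k (sqrt 2 - 1) ltac:(lra)) as Hup.
  rewrite slope_opt in Hup.
  pose proof (slope_le_V1 k p Hp) as Hlow.
  assert (Hcorr : 2 / (1 - p) ^ 2 <= 200).
  { assert (0 < (1 - p) ^ 2) by (apply pow_lt; lra).
    apply (Rmult_le_reg_r ((1 - p) ^ 2)); [lra|].
    unfold Rdiv; rewrite Rmult_assoc, Rinv_l by lra; nra. }
  pose proof (sq_dist_opt_le_slope p Hp).
  nra.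
Qed.

Lemma Un_cv_of_sq_dist_bound (u : nat -> R) (l C : R) :
  (exists N, forall k, (N <= k)%nat -> INR k * (u k - l) ^ 2 <= C) -> Un_cv u l.
Proof.
  intros [N HN] eps Heps.
  assert (Heps2 : 0 < eps ^ 2) by (apply pow_lt; lra).
  destruct (INR_archimed (eps ^ 2) C Heps2) as [n0 Hn0].
  exists (S (N + n0)); intros k Hk.
  specialize (HN k ltac:(lia)).
  assert (Hk0 : INR n0 < INR k) by (apply lt_INR; lia).
  pose proof (pos_INR n0).
  assert (Hsq : (u k - l) ^ 2 < eps ^ 2) by nra.
  unfold Rdist; apply Rabs_def1; nra.
Qed.

Theorem corollary1 (B : R) (hB : 0 < B) :
  (exists N : nat, forall k : nat, (N <= k)%nat -> exists p, is_minimizer B k p) /\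
  (forall ps : nat -> R,
     (exists N : nat, forall k : nat, (N <= k)%nat -> is_minimizer B k (ps k)) ->
     Un_cv ps (sqrt 2 - 1)).
Proof.
  split.
  - exists 6%nat; intros k Hk.
    destruct (exists_minimizer k Hk) as [p Hp].
    exists p; apply (is_minimizer_scale B k p hB), Hp.
  - intros ps [N HN].
    apply Un_cv_of_sq_dist_bound with (C := 200).
    exists (Nat.max N 14); intros k Hk.
    apply minimizer_sq_dist; [lia|].
    apply (is_minimizer_scale B k (ps k) hB), HN; lia.
Qed.
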